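(* For any prime power $q$, there exists a $\left(3;\ (q^2+q+1)(q+1),\ q^2+q+1,\ 3\right)$ perfect hash family.
   Context: Let $r,m,q',t$ be integers with $m\ge q'\ge t\ge2$. An $(r;m,q',t)$ perfect hash family (PHF) is a set $\mathcal{X}$ of $r$ functions from a set $\mathcal{B}$ with $|\mathcal{B}|=m$ to a set $\mathcal{C}$ with $|\mathcal{C}|=q'$ such that for every $\mathcal{T}\subseteq\mathcal{B}$ with $|\mathcal{T}|=t$ there is at least one $\varphi\in\mathcal{X}$ whose restriction to $\mathcal{T}$ is injective. Equivalently, an $r\times m$ array over $q'$ symbols in which every $r\times t$ subarray has at least one row with $t$ distinct symbols. *)

From mathcomp Require Import all_boot.
Set Implicit Arguments. Unset Strict Implicit. Unset Printing Implicit Defensive.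

Definition prime_power (q : nat) : Prop :=
  exists p k, prime p /\ 0 < k /\ q = p ^ k.

Definition is_PHF (r m q' t : nat) (X : 'I_r -> {ffun 'I_m -> 'I_q'}) : Prop :=
  forall T : {set 'I_m}, #|T| = t ->
    exists i : 'I_r, {in T &, injective (X i)}.

Definition PHF_exists (r m q' t : nat) : Prop :=
  [/\ q' <= m, t <= q', 2 <= t &
      exists X : 'I_r -> {ffun 'I_m -> 'I_q'}, @is_PHF r m q' t X].

(* Put N = q^2 + q + 1 and pick shifts d_0, ..., d_q with 2 d_i < N and no
   three-term arithmetic progression (read the binary digits of i in base 3).
   Index the N (q + 1) points by pairs (j, i) with j < N, i <= q, and hash
   (j, i) to j + d_i, j and j - d_i modulo N.  As N is odd, no two of these
   hashes collide on the same pair of points, so on a 3-set where none of them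
   is injective the three collisions sit on the three edges of the triangle.
   Adding the congruences of the outer hashes around the triangle gives
   d_a + d_b = 2 d_c modulo N, hence exactly since 2 d_i < N, so a = b.
   The construction works for every q > 0. *)

From mathcomp Require Import all_boot all_algebra zify ring.
Import GRing.Theory Num.Theory.
Set Implicit Arguments. Unset Strict Implicit. Unset Printing Implicit Defensive.

Lemma card3_third (T : finType) (S : {set T}) x y :
  #|S| = 3 -> x \in S -> y \in S -> x != y ->
  exists z, [/\ z != x, z != y & {subset S <= [set x; y; z]}].
Proof.
move=> cardS xS yS xy.
have sub_xy : [set x; y] \subset S by rewrite subUset !sub1set xS yS.
have : #|S :\: [set x; y]| == 1 by rewrite cardsD (setIidPr sub_xy) cards2 xy cardS.
move/cards1P => [z Sz].
have : z \in S :\: [set x; y] by rewrite Sz set11.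
rewrite !inE negb_or => /andP[/andP[zx zy] _].
exists z; split=> // u uS; rewrite !inE.
have [|uxy] := boolP (u \in [set x; y]); first by rewrite !inE => ->.
have : u \in [set z] by rewrite -Sz inE uxy.
by rewrite inE => ->; rewrite !orbT.
Qed.

Lemma collision_with_third (T : finType) (rT : eqType) (k : T -> rT)
    (S : {set T}) x y z :
  {subset S <= [set x; y; z]} -> k x != k y -> ~~ dinjectiveb k S ->
  k z = k x \/ k z = k y.
Proof.
move=> subS kxy /dinjectivePn[u /subS uS [v /andP[vu /subS vS] kuv]].
move: uS vS vu kuv kxy; rewrite !inE -!orbA.
by case/or3P=> /eqP-> /or3P[]/eqP->; rewrite ?eqxx // => _ kuv;
  rewrite ?kuv ?eqxx //; auto.
Qed.

Lemma triple_injective_in (T : finType) (rT : eqType) (f g h : T -> rT)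
    (S : {set T}) :
  injective (fun x => (f x, g x)) -> injective (fun x => (g x, h x)) ->
  injective (fun x => (f x, h x)) ->
  (forall x y z, g x = g y -> f y = f z -> h z = h x -> x = y) ->
  #|S| = 3 ->
  [\/ {in S &, injective f}, {in S &, injective g} | {in S &, injective h}].
Proof.
move=> inj_fg inj_gh inj_fh triangle cardS.
have [/dinjectiveP|nf] := boolP (dinjectiveb f S); first by constructor 1.
have [/dinjectiveP|nh] := boolP (dinjectiveb h S); first by constructor 3.
have [/dinjectiveP|/dinjectivePn[x xS [y /andP[yx yS] gxy]]] :=
  boolP (dinjectiveb g S); first by constructor 2.
have xy : x != y by rewrite eq_sym.
have [z [zx zy subS]] := card3_third cardS xS yS xy.
have fxy : f x != f y.
  by apply: contra xy => /eqP fxy; apply/eqP/inj_fg; rewrite fxy gxy.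
have hxy : h x != h y.
  by apply: contra xy => /eqP hxy; apply/eqP/inj_gh; rewrite gxy hxy.
exfalso; move/eqP: xy; apply.
have [fzx|fzy] := collision_with_third subS fxy nf;
  have [hzx|hzy] := collision_with_third subS hxy nh.
- by case/eqP: zx; apply: inj_fh; rewrite fzx hzx.
- by symmetry; apply: (triangle y x z); rewrite // fzx.
- by apply: (triangle x y z); rewrite // fzy.
- by case/eqP: zy; apply: inj_fh; rewrite fzy hzy.
Qed.

Lemma dvdz_small (N : nat) (X : int) : (N %| X)%Z -> `|X| < N -> X = 0%R.
Proof.
rewrite dvdzE absz_nat => dvdNX ltXN; apply/eqP; rewrite -absz_eq0.
by apply: contraLR dvdNX; rewrite -lt0n => /gtnNdvd ->.
Qed.

Section ShiftedHashes.

Variables (N s : nat) (d : nat -> nat).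

Local Notation point := 'I_(N * s).

Definition point_row (x : point) : nat := x %/ s.
Definition point_col (x : point) : nat := x %% s.
Definition point_shift (x : point) : nat := d (point_col x).

Definition shifted_hash (c : int) (x : point) : nat :=
  `|((point_row x)%:Z + c * (point_shift x)%:Z) %% N|%Z.

Lemma point_N_gt0 (x : point) : 0 < N.
Proof.
by have /(leq_ltn_trans (leq0n x)) := ltn_ord x; rewrite muln_gt0 => /andP[].
Qed.

Lemma point_s_gt0 (x : point) : 0 < s.
Proof.
by have /(leq_ltn_trans (leq0n x)) := ltn_ord x; rewrite muln_gt0 => /andP[].
Qed.

Lemma point_row_lt x : point_row x < N.
Proof. by rewrite ltn_divLR ?ltn_ord ?(point_s_gt0 x). Qed.

Lemma point_col_lt x : point_col x < s.
Proof. exact/ltn_pmod/(point_s_gt0 x). Qed.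

Lemma point_row_col_inj x y :
  point_row x = point_row y -> point_col x = point_col y -> x = y.
Proof.
move=> rxy cxy; apply/val_inj.
by rewrite /= (divn_eq x s) (divn_eq y s) -!/(point_row _) -!/(point_col _) rxy cxy.
Qed.

Lemma shifted_hash_lt c x : shifted_hash c x < N.
Proof.
have N_gt0 := point_N_gt0 x.
have N_neq0 : (N%:Z != 0)%R by rewrite -lt0n.
by rewrite /shifted_hash -ltz_nat gez0_abs ?modz_ge0 ?ltz_pmod ?ltz_nat.
Qed.

Lemma shifted_hash_collision c x y : shifted_hash c x = shifted_hash c y ->
  (N %| ((point_row x)%:Z - (point_row y)%:Z
         + c * ((point_shift x)%:Z - (point_shift y)%:Z))%R)%Z.
Proof.
have N_neq0 : (N%:Z != 0)%R by rewrite -lt0n (point_N_gt0 x).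
rewrite /shifted_hash => /eqP; rewrite -eqz_nat !gez0_abs ?modz_ge0 // eqz_mod_dvd.
by congr (_ %| _)%Z; ring.
Qed.

Lemma point_row_dvdz x y :
  (N %| ((point_row x)%:Z - (point_row y)%:Z)%R)%Z -> point_row x = point_row y.
Proof. by move/dvdz_small; have := point_row_lt x; have := point_row_lt y; lia. Qed.

Hypothesis N_odd : odd N.
Hypothesis d_small : forall i, i < s -> 2 * d i < N.
Hypothesis d_AP_free : forall a b c, a < s -> b < s -> c < s ->
  d a + d b = 2 * d c -> a = b.

Lemma point_shift_small x : 2 * point_shift x < N.
Proof. exact/d_small/point_col_lt. Qed.

Lemma point_shift_AP_free x y z :
  point_shift x + point_shift y = 2 * point_shift z -> point_col x = point_col y.
Proof. exact: d_AP_free (point_col_lt x) (point_col_lt y) (point_col_lt z). Qed.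

Lemma shifted_hash_pair_inj c c' :
  coprimez N (c - c') -> injective (fun x => (shifted_hash c x, shifted_hash c' x)).
Proof.
move=> cop x y [/shifted_hash_collision dvd_c /shifted_hash_collision dvd_c'].
have shift_xy : point_shift x = point_shift y.
  have : (N %| ((c - c') * ((point_shift x)%:Z - (point_shift y)%:Z))%R)%Z.
    by have := rpredB dvd_c dvd_c'; congr (_ %| _)%Z; ring.
  rewrite Gauss_dvdzr // => /dvdz_small.
  by have := point_shift_small x; have := point_shift_small y; lia.
apply: point_row_col_inj.
  by apply: point_row_dvdz; move: dvd_c; rewrite shift_xy subrr mulr0 addr0.
by apply: (point_shift_AP_free (z := x)); rewrite shift_xy addnn mul2n.
Qed.

Lemma shifted_hash_triangle x y z :
  shifted_hash 0 x = shifted_hash 0 y -> shifted_hash 1 y = shifted_hash 1 z ->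
  shifted_hash (-1) z = shifted_hash (-1) x -> x = y.
Proof.
move=> /shifted_hash_collision; rewrite mul0r addr0 => /point_row_dvdz rxy.
move=> /shifted_hash_collision dvd_yz /shifted_hash_collision dvd_zx.
have : (N %| ((point_shift x)%:Z + (point_shift y)%:Z - 2 * (point_shift z)%:Z)%R)%Z.
  by have := rpredD dvd_yz dvd_zx; rewrite rxy; congr (_ %| _)%Z; ring.
move/dvdz_small => AP.
apply: point_row_col_inj rxy (point_shift_AP_free (z := z) _).
by have := point_shift_small x; have := point_shift_small y;
  have := point_shift_small z; lia.
Qed.

Definition shifted_hashes (k : 'I_3) : {ffun point -> 'I_N} :=
  [ffun x => Ordinal (shifted_hash_lt (1 - k%:Z) x)].

Lemma shifted_hashes_PHF : is_PHF 3 shifted_hashes.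
Proof.
move=> S cardS.
have inj_at (k : 'I_3) c : c = (1 - k%:Z)%R ->
    {in S &, injective (shifted_hash c)} ->
    exists k, {in S &, injective (shifted_hashes k)}.
  by move=> -> inj; exists k => x y xS yS /(congr1 val); rewrite !ffunE; apply: inj.
have pair_inj c c' : `|c - c'|%N %| 2 ->
    injective (fun x => (shifted_hash c x, shifted_hash c' x)).
  move=> dvd_cc'; apply/shifted_hash_pair_inj; rewrite coprimezE absz_nat.
  by apply: coprime_dvdr dvd_cc' _; rewrite coprimen2.
have [||] := triple_injective_in (pair_inj 1 0 isT) (pair_inj 0 (-1)%R isT)
  (pair_inj 1 (-1)%R isT) shifted_hash_triangle cardS.
- exact: (inj_at ord0).
- exact: (inj_at (Ordinal (isT : 1 < 3))).
- exact: (inj_at ord_max).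
Qed.

End ShiftedHashes.

Fixpoint bits_in_base3 (k n : nat) : nat :=
  if k is k'.+1 then odd n + 3 * bits_in_base3 k' n./2 else 0.

Lemma bits_in_base3_AP_free k m n p : m < 2 ^ k -> n < 2 ^ k ->
  bits_in_base3 k m + bits_in_base3 k n = 2 * bits_in_base3 k p -> m = n.
Proof.
elim: k m n p => [|k IHk] m n p /=; first by rewrite !ltnS !leqn0 => /eqP-> /eqP->.
rewrite expnS mul2n -!ltn_half_double => m_lt n_lt digits.
have [odd_mn AP] : odd m = odd n /\
    bits_in_base3 k m./2 + bits_in_base3 k n./2 = 2 * bits_in_base3 k p./2.
  by move: digits; case: (odd m); case: (odd n); case: (odd p) => /=; lia.
by rewrite -(odd_double_half m) -(odd_double_half n) odd_mn (IHk _ _ _ m_lt n_lt AP).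
Qed.

Lemma bits_in_base3_bound k n : 2 * bits_in_base3 k n <= n ^ 2 + n.
Proof.
elim: k n => [|k IHk] n //=.
have := IHk n./2; have := odd_double_half n.
by case: (odd n) => /=; nia.
Qed.

Theorem lemma7 (q : nat) (hq : prime_power q) :
  PHF_exists 3 ((q ^ 2 + q + 1) * (q + 1)) (q ^ 2 + q + 1) 3.
Proof.
have q_gt0 : 0 < q by case: hq => p [k [p_pr [_ ->]]]; rewrite expn_gt0 prime_gt0.
split=> //; first by rewrite leq_pmulr // addn1.
  by nia.
exists (shifted_hashes _ _ (bits_in_base3 q)).
apply: shifted_hashes_PHF.
- by rewrite !oddD oddX addbb.
- move=> i lt_iq; apply: leq_ltn_trans (bits_in_base3_bound q i) _.
  by nia.
- move=> a b c lt_aq lt_bq _ AP; apply: bits_in_base3_AP_free AP;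
  by have := ltn_expl q (isT : 1 < 2); lia.
Qed.
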